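(* For $n\in\mathbb{N}$ let $(U_k^{(n)})_{k\in\mathbb{N}}$ be independent random variables uniformly distributed on $\{1,\dots,n\}$. Assume $m_n\to\infty$ and $m_n=o(n)$ as $n\to\infty$. Then $${\rm Var}\Bigl(\sum_{p\le m_n,\ p\ \text{prime}}\log p\cdot\mathbbm{1}_{\{\max_{1\le k\le m_n}\lambda_p(U_k^{(n)})\ge1\}}\Bigr)=O(m_n\log m_n),\qquad n\to\infty.$$
   Context: For a prime $p$ and $k\in\mathbb{N}$, $\lambda_p(k)$ is the exponent of $p$ in the prime factorization of $k$. *)

From HB Require Import structures.
From mathcomp Require Import all_boot all_order all_algebra.
From mathcomp Require Import all_classical all_reals all_analysis.
Set Implicit Arguments. Unset Strict Implicit. Unset Printing Implicit Defensive.
Import Order.TTheory GRing.Theory Num.Theory.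
Local Open Scope ring_scope.

Definition lambda (p k : nat) : nat := logn p k.

(* An outcome of (U_1^{(n)}, ..., U_m^{(n)}): u : {ffun 'I_m -> 'I_n}, with
   U_{k+1} = (u k).+1 in {1,...,n}.  The joint law of m independent uniform
   variables on {1..n} is the uniform law on this finite product space. *)
Definition Uval (n m : nat) (u : {ffun 'I_m -> 'I_n}) (k : 'I_m) : nat :=
  (u k).+1.

Definition Ssum (R : realType) (n m : nat) (u : {ffun 'I_m -> 'I_n}) : R :=
  \sum_(p < m.+1 | prime p)
     ln (p%:R : R) *
     (if (1 <= \max_(k < m) lambda p (Uval u k))%N then 1 else 0).

Definition Expect (R : realType) (n m : nat) (f : {ffun 'I_m -> 'I_n} -> R) : R :=
  (\sum_(u : {ffun 'I_m -> 'I_n}) f u) / (#|{ffun 'I_m -> 'I_n}|)%:R.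

Definition VarS (R : realType) (n m : nat) : R :=
  @Expect R n m (fun u => (@Ssum R n m u - @Expect R n m (@Ssum R n m)) ^+ 2).

From HB Require Import structures.
From mathcomp Require Import all_boot all_order all_algebra.
From mathcomp Require Import all_classical all_reals all_analysis.
From mathcomp Require Import zify ring lra.
Import Order.TTheory GRing.Theory Num.Theory.
Set Implicit Arguments. Unset Strict Implicit. Unset Printing Implicit Defensive.

(* Write S = \sum_(p <= m) log p * (1 - Y_p) with Y_p = \prod_k 1{p does not divide U_k},
   so that Var S = \sum_(p, q) log p * log q * Cov(Y_p, Y_q).  By independence, E[Y_p Y_q]
   and E[Y_p] E[Y_q] are the m-th powers of the density in [1, n] of the integers divisible
   by neither p nor q, and of the product of the two separate densities.  Inclusion-exclusion
   with floors shows that these differ by at most (1/p + 1/q)/n when p <> q, hence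
   Cov(Y_p, Y_q) <= m (1/p + 1/q)/n, while Cov(Y_p, Y_p) <= 1.  Therefore
     Var S <= \sum_(p <= m) log^2 p + 2 (m/n) theta(m) \sum_(p <= m) log p / p,
   where theta(m) = \sum_(p <= m) log p <= m log 8 (Chebyshev, from primorial n <= 8^n via
   the middle binomial coefficient) and \sum_(p <= m) log p / p <= log m + log 8 (Mertens,
   from Legendre's formula); this is O(m log m) as soon as m <= n. *)

Local Open Scope nat_scope.

Lemma dvdn_prod_pfactor (r : seq nat) (e : nat -> nat) N :
  uniq r -> all prime r -> {in r, forall p, p ^ e p %| N} ->
  \prod_(p <- r) p ^ e p %| N.
Proof.
elim: r => [|p r IH] /=; first by rewrite big_nil dvd1n.
case/andP=> p_r r_uniq /andP[p_pr r_pr] dvdN.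
rewrite big_cons Gauss_dvd ?dvdN ?mem_head ?IH // => [q r_q|].
  by rewrite dvdN // inE r_q orbT.
apply: coprimeXl; rewrite big_seq; apply: (big_ind (coprime p)) => [|x y|q r_q].
- exact: coprimen1.
- by move=> cpx cpy; rewrite coprimeMr cpx.
- have q_pr : prime q := allP r_pr q r_q.
  rewrite coprimeXr // prime_coprime // dvdn_prime2 //.
  by apply: contraNneq p_r => ->.
Qed.

Lemma pfactor_div_dvd_fact p m : prime p -> p ^ (m %/ p) %| m`!.
Proof.
move=> p_pr; elim: m => [|m IH]; first by rewrite div0n.
rewrite divnS ?prime_gt0 // factS.
have [p_dvd|_] := boolP (p %| m.+1); first by rewrite add1n expnS dvdn_mul.
by rewrite add0n dvdn_mull.
Qed.

Lemma fact_leq_expn m : m`! <= m ^ m.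
Proof.
elim: m => // m IH; rewrite factS expnS leq_mul2l /=.
by apply: leq_trans IH _; case: m => // m; rewrite leq_exp2r.
Qed.

Lemma prod_pfactor_div_leq m :
  \prod_(0 <= p < m.+1 | prime p) p ^ (m %/ p) <= m ^ m.
Proof.
apply: leq_trans (fact_leq_expn m); apply: dvdn_leq (fact_gt0 m) _.
rewrite -big_filter; apply: dvdn_prod_pfactor.
- by rewrite filter_uniq ?iota_uniq.
- exact: filter_all.
- by move=> p; rewrite mem_filter => /andP[/pfactor_div_dvd_fact].
Qed.

Definition primorial n := \prod_(0 <= p < n.+1 | prime p) p.

Lemma leq_bin_exp2 n k : 'C(n, k) <= 2 ^ n.
Proof.
elim: n k => [|n IH] [|k] //; first by rewrite bin0 expn_gt0.
by rewrite binS expnS mul2n -addnn leq_add.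
Qed.

Lemma coprime_fact p a : prime p -> a < p -> coprime p a`!.
Proof.
move=> p_pr; elim: a => [|a IH] ltap; first exact: coprimen1.
rewrite factS coprimeMr IH ?(ltnW ltap) // andbT prime_coprime //.
by apply/negP => /(dvdn_leq (ltn0Sn _)); rewrite leqNgt ltap.
Qed.

Lemma prime_dvd_bin_mid k p :
  prime p -> k.+1 < p <= k.*2.+1 -> p %| 'C(k.*2.+1, k).
Proof.
move=> p_pr /andP[ltkp lep2k].
have: p %| (k.*2.+1)`! by rewrite dvdn_fact // prime_gt0.
rewrite -(bin_fact (_ : k <= k.*2.+1)); last by lia.
by rewrite Gauss_dvdl // coprimeMr !coprime_fact //; lia.
Qed.

Lemma primorial_odd k : primorial k.*2.+1 <= primorial k.+1 * 'C(k.*2.+1, k).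
Proof.
rewrite /primorial (@big_cat_nat _ _ _ k.+2) //=; last by lia.
apply: leq_mul => //; apply: dvdn_leq; first by rewrite bin_gt0; lia.
rewrite -big_filter; apply: (@dvdn_prod_pfactor _ (fun=> 1)).
- by rewrite filter_uniq ?iota_uniq.
- exact: filter_all.
- move=> p; rewrite mem_filter mem_index_iota => /andP[p_pr range_p].
  by rewrite expn1 prime_dvd_bin_mid.
Qed.

Lemma primorial_even k : primorial k.+2.*2 = primorial k.+1.*2.+1.
Proof.
rewrite /primorial !doubleS big_mkcond big_nat_recr //= -big_mkcond ifN ?muln1 //.
by apply/negP => /prime_oddPn; rewrite /= odd_double => /(_ isT).
Qed.

Lemma primorial_leq n : primorial n <= 8 ^ n.
Proof.
elim/ltn_ind: n => n IH; rewrite -(odd_double_half n) in IH *.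
move: (odd n) n./2 IH => [] [|k] IH; try by rewrite /primorial unlock.
- rewrite add1n; apply: leq_trans (primorial_odd _) _.
  apply: leq_trans (leq_mul (IH _ _) (leq_bin_exp2 _ _)) _; first by lia.
  by rewrite (_ : 8 = 2 ^ 3) // -!expnM -expnD leq_pexp2l //; lia.
- case: k IH => [|k] IH; first by rewrite /primorial unlock.
  rewrite add0n primorial_even.
  apply: leq_trans (IH _ _) _; first by lia.
  by rewrite leq_pexp2l // !doubleS.
Qed.

Local Open Scope ring_scope.

Section Expectation.
Variables (R : realType) (n m : nat).
Local Notation outcome := {ffun 'I_m -> 'I_n}.
Implicit Types f g : outcome -> R.

Definition Var f : R := Expect (fun u => (f u - Expect f) ^+ 2).

Definition Cov f g : R := Expect (fun u => (f u - Expect f) * (g u - Expect g)).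

Lemma eq_Expect f g : f =1 g -> Expect f = Expect g.
Proof. by move=> efg; rewrite /Expect; under eq_bigr do rewrite efg. Qed.

Lemma eq_Var f g : f =1 g -> Var f = Var g.
Proof. by move=> efg; rewrite /Var (eq_Expect efg); apply: eq_Expect => u; rewrite efg. Qed.

Lemma ExpectD f g : Expect (fun u => f u + g u) = Expect f + Expect g.
Proof. by rewrite /Expect big_split mulrDl. Qed.

Lemma ExpectZ c f : Expect (fun u => c * f u) = c * Expect f.
Proof. by rewrite /Expect -mulr_sumr mulrA. Qed.

Lemma Expect_sum (I : Type) (r : seq I) (P : pred I) (F : I -> outcome -> R) :
  Expect (fun u => \sum_(i <- r | P i) F i u) = \sum_(i <- r | P i) Expect (F i).
Proof. by rewrite /Expect exchange_big mulr_suml. Qed.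

Lemma Expect_cst c : (0 < n)%N -> @Expect R n m (fun=> c) = c.
Proof.
move=> n_gt0; rewrite /Expect sumr_const -[c *+ _]mulr_natr mulfK // pnatr_eq0.
by rewrite -lt0n card_ffun !card_ord expn_gt0 n_gt0.
Qed.

Lemma Expect_prod (h : 'I_n -> R) :
  Expect (fun u => \prod_(k < m) h (u k)) = ((\sum_i h i) / n%:R) ^+ m.
Proof.
rewrite /Expect -(bigA_distr_bigA (fun=> h)) /= prodr_const.
by rewrite card_ffun !card_ord natrX expr_div_n.
Qed.

Lemma CovE f g : (0 < n)%N ->
  Cov f g = Expect (fun u => f u * g u) - Expect f * Expect g.
Proof.
move=> n_gt0; rewrite /Cov (@eq_Expect _ (fun u =>
  f u * g u + (- Expect g) * f u + ((- Expect f) * g u + Expect f * Expect g))).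
  rewrite !ExpectD (ExpectZ (- Expect g) f) (ExpectZ (- Expect f) g) Expect_cst //; ring.
by move=> u; ring.
Qed.

Lemma Cov_1B f g : (0 < n)%N ->
  Cov (fun u => 1 - f u) (fun u => 1 - g u) = Cov f g.
Proof.
move=> n_gt0; have E1B (h : outcome -> R) : Expect (fun u => 1 - h u) = 1 - Expect h.
  rewrite (@eq_Expect _ (fun u => 1 + (-1) * h u)) => [|u]; last by rewrite mulN1r.
  by rewrite ExpectD ExpectZ Expect_cst // mulN1r.
by rewrite /Cov !E1B; apply: eq_Expect => u; ring.
Qed.

Lemma Var_ge0 f : 0 <= Var f.
Proof. by rewrite /Var /Expect divr_ge0 ?sumr_ge0 // => u _; apply: sqr_ge0. Qed.

Lemma Var_lincomb (I : Type) (r : seq I) (P : pred I) (a : I -> R)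
    (X : I -> outcome -> R) :
  Var (fun u => \sum_(i <- r | P i) a i * X i u) =
  \sum_(i <- r | P i) \sum_(j <- r | P j) a i * a j * Cov (X i) (X j).
Proof.
rewrite /Var Expect_sum (eq_bigr (fun i => a i * Expect (X i))) => [|i _]; last first.
  exact: ExpectZ.
rewrite (@eq_Expect _ (fun u => \sum_(i <- r | P i) \sum_(j <- r | P j)
  a i * a j * ((X i u - Expect (X i)) * (X j u - Expect (X j))))).
  by rewrite Expect_sum; apply: eq_bigr => i _; rewrite Expect_sum;
     apply: eq_bigr => j _; rewrite ExpectZ.
move=> u; rewrite -sumrB expr2 mulr_suml; apply: eq_bigr => i _.
by rewrite mulr_sumr; apply: eq_bigr => j _; ring.
Qed.

End Expectation.

Section NoMultiple.
Variables (R : realType) (n m : nat).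
Local Notation outcome := {ffun 'I_m -> 'I_n}.

Definition ndvdr (p i : nat) : R := if (p %| i)%N then 0 else 1.

Definition nodvd (p : nat) (u : outcome) : R := \prod_(k < m) ndvdr p (Uval u k).

Lemma ndvdrE p i : ndvdr p i = 1 - (p %| i)%:R.
Proof. by rewrite /ndvdr; case: (p %| i)%N; rewrite ?subrr ?subr0. Qed.

Lemma ndvdr_ge0 p i : 0 <= ndvdr p i.
Proof. by rewrite /ndvdr; case: ifP. Qed.

Lemma ndvdr_le1 p i : ndvdr p i <= 1.
Proof. by rewrite /ndvdr; case: ifP. Qed.

Lemma max_lambda_indicator p u : prime p ->
  (if (1 <= \max_(k < m) lambda p (Uval u k))%N then 1 else 0) = 1 - nodvd p u.
Proof.
move=> p_pr; case: (boolP [exists k, p %| Uval u k]%N) => [/existsP[k p_dvd]|].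
- rewrite (_ : 1 <= _)%N; last first.
    by apply: leq_trans (leq_bigmax k); rewrite logn_gt0 mem_primes p_pr p_dvd.
  by rewrite /nodvd (bigD1 k) //= /ndvdr p_dvd mul0r subr0.
- move/existsPn => no_dvd; rewrite ifF; last first.
    apply/negbTE; rewrite -leqNgt; apply/bigmax_leqP => k _.
    by rewrite leqn0 eqn0Ngt logn_gt0 mem_primes p_pr (negbTE (no_dvd k)) andbF.
  by rewrite /nodvd big1 ?subrr // => k _; rewrite /ndvdr (negbTE (no_dvd k)).
Qed.

Lemma Ssum_nodvd u :
  Ssum R u = \sum_(p < m.+1 | prime p) ln (p%:R : R) * (1 - nodvd p u).
Proof. by apply: eq_bigr => p p_pr; rewrite max_lambda_indicator. Qed.

Lemma VarS_Cov : (0 < n)%N ->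
  VarS R n m = \sum_(p < m.+1 | prime p) \sum_(q < m.+1 | prime q)
    ln (p%:R : R) * ln (q%:R : R) * Cov (nodvd p) (nodvd q).
Proof.
move=> n_gt0; rewrite [LHS](_ : _ = Var (@Ssum R n m)) //.
rewrite (eq_Var Ssum_nodvd) Var_lincomb.
by apply: eq_bigr => p _; apply: eq_bigr => q _; rewrite Cov_1B.
Qed.

Lemma Expect_nodvd p :
  Expect (nodvd p) = ((\sum_(i < n) ndvdr p i.+1) / n%:R) ^+ m.
Proof. exact: Expect_prod. Qed.

Lemma Expect_nodvdM p q :
  Expect (fun u => nodvd p u * nodvd q u) =
  ((\sum_(i < n) ndvdr p i.+1 * ndvdr q i.+1) / n%:R) ^+ m.
Proof.
rewrite -(@Expect_prod R n m (fun i : 'I_n => ndvdr p i.+1 * ndvdr q i.+1)).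
by apply: eq_Expect => u; rewrite /nodvd -big_split.
Qed.

Lemma sum_dvdr d : \sum_(i < n) (d %| i.+1)%:R = (n %/ d)%:R :> R.
Proof. by rewrite divn_count_dvd big_add1 /= big_mkord natr_sum. Qed.

Lemma sum_ndvdr p : \sum_(i < n) ndvdr p i.+1 = n%:R - (n %/ p)%:R.
Proof.
under eq_bigr do rewrite ndvdrE.
by rewrite sumrB sumr_const card_ord sum_dvdr.
Qed.

Lemma sum_ndvdrM p q : prime p -> prime q -> p != q ->
  \sum_(i < n) ndvdr p i.+1 * ndvdr q i.+1 =
  n%:R - (n %/ p)%:R - (n %/ q)%:R + (n %/ (p * q))%:R.
Proof.
move=> p_pr q_pr neq_pq.
have copq : coprime p q by rewrite prime_coprime // dvdn_prime2.
have -> : n%:R = \sum_(i < n) 1 :> R by rewrite sumr_const card_ord.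
rewrite -!sum_dvdr -!sumrB -big_split /=.
apply: eq_bigr => i _; rewrite !ndvdrE Gauss_dvd //.
by case: (p %| i.+1)%N; case: (q %| i.+1)%N => /=; ring.
Qed.

End NoMultiple.

Section CovarianceBound.
Variable R : realType.

Lemma mean_ge0_le1 n (h : 'I_n -> R) : (0 < n)%N ->
  (forall i, 0 <= h i <= 1) -> 0 <= (\sum_i h i) / n%:R <= 1.
Proof.
move=> n_gt0 h01; have nR : (0 : R) < n%:R by rewrite ltr0n.
rewrite divr_ge0 ?sumr_ge0 ?ler0n // => [|i _]; last by case/andP: (h01 i).
rewrite ler_pdivrMr // mul1r -[n in n%:R]card_ord -sumr_const.
by apply: ler_sum => i _; case/andP: (h01 i).
Qed.

Lemma exprB_le_mul (a b d : R) k : 0 <= a <= 1 -> 0 <= b <= 1 -> 0 <= d ->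
  a - b <= d -> a ^+ k - b ^+ k <= k%:R * d.
Proof.
move=> /andP[a0 a1] /andP[b0 b1] d0 le_abd.
elim: k => [|k IH]; first by rewrite !expr0 subrr mul0r.
have ak0 : 0 <= a ^+ k by apply: exprn_ge0.
have bk0 : 0 <= b ^+ k by apply: exprn_ge0.
have bk1 : b ^+ k <= 1 by apply: exprn_ile1.
have kd0 : 0 <= k%:R * d by apply: mulr_ge0.
have h1 : a * (a ^+ k - b ^+ k) <= k%:R * d.
  by case: (lerP 0 (a ^+ k - b ^+ k)) => h; nra.
have h2 : b ^+ k * (a - b) <= d by case: (lerP 0 (a - b)) => h; nra.
rewrite !exprS -natr1 mulrDl mul1r.
have -> : a * a ^+ k - b * b ^+ k = a * (a ^+ k - b ^+ k) + b ^+ k * (a - b) by ring.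
lra.
Qed.

Lemma density_cov_le (N p q : nat) : (0 < p <= N)%N -> (0 < q <= N)%N ->
  (N%:R - (N %/ p)%:R - (N %/ q)%:R + (N %/ (p * q))%:R) / N%:R
    - (N%:R - (N %/ p)%:R) / N%:R * ((N%:R - (N %/ q)%:R) / N%:R)
  <= (p%:R^-1 + q%:R^-1) / N%:R :> R.
Proof.
move=> /andP[p_gt0 le_pN] /andP[q_gt0 le_qN].
have ceil k : (0 < k)%N -> N%:R - k%:R < (N %/ k)%:R * k%:R :> R.
  move=> k_gt0; rewrite ltrBlDr -natrM -natrD ltr_nat addnC -mulSn.
  exact: ltn_ceil.
have hx := ceil p p_gt0; have hy := ceil q q_gt0.
have hz : (N %/ (p * q))%:R * (p%:R * q%:R) <= N%:R :> R.
  by rewrite -!natrM ler_nat leq_divM.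
have z0 : 0 <= (N %/ (p * q))%:R :> R by apply: ler0n.
move: (N %/ p)%:R (N %/ q)%:R (N %/ (p * q))%:R hx hy hz z0 => x y z hx hy hz z0.
have pR : (0 : R) < p%:R by rewrite ltr0n.
have qR : (0 : R) < q%:R by rewrite ltr0n.
have NR : (0 : R) < N%:R by rewrite ltr0n; apply: leq_trans le_pN.
have pN : p%:R <= N%:R :> R by rewrite ler_nat.
have qN : q%:R <= N%:R :> R by rewrite ler_nat.
have a1 : N%:R * (z * (p%:R * q%:R)) <= N%:R * N%:R :> R by rewrite ler_pM2l.
have a2 : (N%:R - p%:R) * (N%:R - q%:R) <= (x * p%:R) * (y * q%:R) :> R.
  by apply: ler_pM; lra.
have key : p%:R * q%:R * (N%:R * z - x * y) - (N%:R * q%:R + N%:R * p%:R) <= 0 :> R.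
  by nra.
rewrite -subr_le0.
have -> : (N%:R - x - y + z) / N%:R - (N%:R - x) / N%:R * ((N%:R - y) / N%:R)
    - (p%:R^-1 + q%:R^-1) / N%:R =
  (p%:R * q%:R * (N%:R * z - x * y) - (N%:R * q%:R + N%:R * p%:R))
    * (p%:R * q%:R * N%:R * N%:R)^-1 :> R.
  by field; rewrite !gt_eqF.
by rewrite mulr_le0_ge0 // invr_ge0 !mulr_ge0 // ltW.
Qed.

Lemma Cov_nodvd_le n m p q : prime p -> prime q -> (p <= n)%N -> (q <= n)%N ->
  Cov (@nodvd R n m p) (@nodvd R n m q)
  <= (p == q)%:R + m%:R / n%:R * (p%:R^-1 + q%:R^-1).
Proof.
move=> p_pr q_pr le_pn le_qn.
have n_gt0 : (0 < n)%N := leq_trans (prime_gt0 p_pr) le_pn.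
rewrite CovE // Expect_nodvdM !Expect_nodvd.
set a := (\sum_(i < n) ndvdr R p i.+1 * ndvdr R q i.+1) / n%:R.
set b := (\sum_(i < n) ndvdr R p i.+1) / n%:R.
set c := (\sum_(i < n) ndvdr R q i.+1) / n%:R.
have /andP[a0 a1] : 0 <= a <= 1.
  apply: mean_ge0_le1 => // i.
  by rewrite mulr_ge0 ?mulr_ile1 ?ndvdr_ge0 ?ndvdr_le1.
have /andP[b0 b1] : 0 <= b <= 1.
  by apply: mean_ge0_le1 => // i; rewrite ndvdr_ge0 ndvdr_le1.
have /andP[c0 c1] : 0 <= c <= 1.
  by apply: mean_ge0_le1 => // i; rewrite ndvdr_ge0 ndvdr_le1.
have [<-|neq_pq] := eqVneq p q.
  have : a ^+ m <= 1 by apply: exprn_ile1.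
  have : 0 <= b ^+ m * c ^+ m by rewrite mulr_ge0 ?exprn_ge0.
  have : 0 <= m%:R / n%:R * (p%:R^-1 + p%:R^-1) :> R.
    by rewrite !mulr_ge0 ?invr_ge0 ?addr_ge0 ?invr_ge0 ?ler0n.
  rewrite mulr1n; lra.
rewrite add0r -exprMn.
rewrite (_ : m%:R / n%:R * _ = m%:R * ((p%:R^-1 + q%:R^-1) / n%:R)); last by ring.
apply: exprB_le_mul.
- by rewrite a0.
- by rewrite mulr_ge0 // mulr_ile1.
- by rewrite !mulr_ge0 ?invr_ge0 ?addr_ge0 ?invr_ge0 ?ler0n.
rewrite /a /b /c sum_ndvdrM // !sum_ndvdr.
by apply: density_cov_le; rewrite ?prime_gt0.
Qed.

End CovarianceBound.

Section PrimeSums.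
Variable R : realType.

Lemma ln_prod (I : Type) (r : seq I) (P : pred I) (F : I -> R) :
  (forall i, P i -> 0 < F i) ->
  ln (\prod_(i <- r | P i) F i) = \sum_(i <- r | P i) ln (F i).
Proof.
move=> F_gt0; elim: r => [|i r IH]; first by rewrite !big_nil ln1.
rewrite !big_cons; case: ifP => // Pi.
by rewrite lnM ?IH // posrE ?F_gt0 // prodr_gt0.
Qed.

Lemma ln_natr_prod_primes m (e : nat -> nat) :
  \sum_(p < m.+1 | prime p) (e p)%:R * ln (p%:R : R) =
  ln (\prod_(0 <= p < m.+1 | prime p) p ^ e p)%N%:R.
Proof.
rewrite natr_prod ln_prod => [|p p_pr]; last by rewrite natrX exprn_gt0 // ltr0n prime_gt0.
rewrite big_mkord; apply: eq_bigr => p p_pr.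
by rewrite natrX lnXn ?ltr0n ?prime_gt0 // mulr_natl.
Qed.

Lemma sum_ln_primes_le m : \sum_(p < m.+1 | prime p) ln (p%:R : R) <= m%:R * ln 8.
Proof.
under eq_bigr do rewrite -[ln _]mul1r.
rewrite (ln_natr_prod_primes m (fun=> 1%N)) mulr_natl -lnXn // -natrX.
rewrite ler_ln ?posrE ?ltr0n ?expn_gt0 ?prodn_cond_gt0 // => [|p /prime_gt0]; last by rewrite expn1.
by rewrite ler_nat (eq_bigr _ (fun p _ => expn1 p)) primorial_leq.
Qed.

Lemma sum_divn_ln_primes_le m : (0 < m)%N ->
  \sum_(p < m.+1 | prime p) (m %/ p)%:R * ln (p%:R : R) <= m%:R * ln m%:R.
Proof.
move=> m_gt0; rewrite ln_natr_prod_primes mulr_natl -lnXn ?ltr0n // -natrX.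
rewrite ler_ln ?posrE ?ltr0n ?expn_gt0 ?m_gt0 ?ler_nat ?prod_pfactor_div_leq //.
by apply: prodn_cond_gt0 => p /prime_gt0 p_gt0; rewrite expn_gt0 p_gt0.
Qed.

Lemma sum_ln_div_primes_le m : (0 < m)%N ->
  \sum_(p < m.+1 | prime p) ln (p%:R : R) / p%:R <= ln m%:R + ln 8.
Proof.
move=> m_gt0; have mR : (0 : R) < m%:R by rewrite ltr0n.
rewrite -(ler_pM2l mR) mulrDr mulr_sumr.
apply: le_trans (lerD (sum_divn_ln_primes_le m_gt0) (sum_ln_primes_le m)).
rewrite -big_split /=; apply: ler_sum => p p_pr.
have p_gt0 := prime_gt0 p_pr.
have le_ceil : m%:R / p%:R <= (m %/ p)%:R + 1 :> R.
  rewrite ler_pdivrMr ?ltr0n // natr1 -natrM ler_nat.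
  exact: ltnW (ltn_ceil m p_gt0).
rewrite (_ : m%:R * _ = m%:R / p%:R * ln p%:R); last by ring.
rewrite -[X in _ <= _ + X]mul1r -mulrDl; apply: ler_wpM2r le_ceil.
by rewrite ln_ge0 // ler1n.
Qed.

End PrimeSums.

Section VarianceBound.
Variable R : realType.

Lemma double_sum_diag_add (I : finType) (P : pred I) (a b : I -> R) (c : R) :
  \sum_(i | P i) \sum_(j | P j) a i * a j * ((i == j)%:R + c * (b i + b j)) =
  \sum_(i | P i) a i ^+ 2 + c * 2 * (\sum_(i | P i) a i) * (\sum_(i | P i) a i * b i).
Proof.
rewrite (eq_bigr (fun i => a i ^+ 2 +
    c * (a i * b i * \sum_(j | P j) a j + a i * \sum_(j | P j) a j * b j))).
  rewrite big_split /= -mulr_sumr big_split /= -!mulr_suml.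
  by congr (_ + _); ring.
move=> i Pi; rewrite (eq_bigr (fun j => a i * a j * (i == j)%:R +
    c * (a i * b i * a j + a i * (a j * b j)))) => [|j _]; last by ring.
rewrite big_split /= (bigD1 i) //= eqxx mulr1 big1 ?addr0 => [|j /andP[_ neq_ji]].
  by rewrite -mulr_sumr big_split /= -!mulr_sumr expr2.
by rewrite eq_sym (negbTE neq_ji) mulr0.
Qed.

Lemma VarS_le_sums n M : (0 < n)%N -> (M <= n)%N ->
  VarS R n M <= \sum_(p < M.+1 | prime p) ln (p%:R : R) ^+ 2
    + M%:R / n%:R * 2 * (\sum_(p < M.+1 | prime p) ln (p%:R : R))
        * (\sum_(p < M.+1 | prime p) ln (p%:R : R) / p%:R).
Proof.
move=> n_gt0 le_Mn; rewrite VarS_Cov // -double_sum_diag_add.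
apply: ler_sum => p p_pr; apply: ler_sum => q q_pr.
have ord_le_n (k : 'I_M.+1) : (k <= n)%N by rewrite (leq_trans _ le_Mn) // -ltnS.
rewrite ler_wpM2l ?mulr_ge0 ?ln_ge0 ?ler1n ?prime_gt0 //.
exact: Cov_nodvd_le (ord_le_n p) (ord_le_n q).
Qed.

Lemma VarS_le n M : (0 < n)%N -> (2 <= M <= n)%N ->
  VarS R n M <= (3 * ln 8 + 2 * ln 8 ^+ 2 / ln 2) * (M%:R * ln M%:R).
Proof.
move=> n_gt0 /andP[M_ge2 le_Mn].
apply: le_trans (VarS_le_sums n_gt0 le_Mn) _.
have M_gt0 : (0 < M)%N by apply: leq_trans M_ge2.
have MR : (0 : R) < M%:R by rewrite ltr0n.
have nR : (0 : R) < n%:R by rewrite ltr0n.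
have ln_p_ge0 (p : nat) : prime p -> 0 <= ln (p%:R : R).
  by move=> /prime_gt0 p_gt0; rewrite ln_ge0 // ler1n.
set theta := \sum_(p < M.+1 | prime p) ln (p%:R : R).
set K := \sum_(p < M.+1 | prime p) ln (p%:R : R) / p%:R.
have theta_ge0 : 0 <= theta by apply: sumr_ge0 => p /ln_p_ge0.
have K_ge0 : 0 <= K by apply: sumr_ge0 => p /ln_p_ge0 ? ; rewrite divr_ge0.
have theta_le : theta <= M%:R * ln 8 := sum_ln_primes_le R M.
have K_le : K <= ln M%:R + ln 8 := sum_ln_div_primes_le R M_gt0.
have ln2_gt0 : (0 : R) < ln 2 by rewrite ln_gt0 // ltr1n.
have ln2_le : ln 2 <= ln (M%:R : R) by rewrite ler_ln ?posrE ?ler_nat // ltr0n.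
have ln8_ge0 : (0 : R) <= ln 8 by rewrite ln_ge0 // ler1n.
have sq_le : \sum_(p < M.+1 | prime p) ln (p%:R : R) ^+ 2 <= ln M%:R * theta.
  rewrite mulr_sumr; apply: ler_sum => p p_pr; rewrite expr2 ler_wpM2r ?ln_p_ge0 //.
  by rewrite ler_ln ?posrE ?ltr0n ?(prime_gt0 p_pr) // ler_nat -ltnS.
have ratio_le1 : M%:R / n%:R <= 1 :> R by rewrite ler_pdivrMr // mul1r ler_nat.
have cross : M%:R / n%:R * 2 * theta * K <= 2 * (M%:R * ln 8 * (ln M%:R + ln 8)).
  have : theta * K <= M%:R * ln 8 * (ln M%:R + ln 8) by rewrite ler_pM.
  have : 0 <= M%:R / n%:R :> R by rewrite divr_ge0 ?ltW.
  have : 0 <= theta * K by rewrite mulr_ge0.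
  nra.
have ln_theta : ln M%:R * theta <= ln M%:R * (M%:R * ln 8).
  by rewrite ler_wpM2l // (le_trans _ ln2_le) ?ltW.
have ln8_sq : ln 8 ^+ 2 * M%:R <= ln 8 ^+ 2 / ln 2 * (M%:R * ln (M%:R : R)).
  rewrite (_ : _ / _ * _ = ln 8 ^+ 2 * (M%:R * (ln M%:R / ln 2))); last by ring.
  apply: ler_wpM2l; first exact: sqr_ge0.
  rewrite -[X in X <= _]mulr1; apply: ler_wpM2l; first exact: ltW.
  by rewrite ler_pdivlMr // mul1r.
nra.
Qed.

End VarianceBound.

Theorem lemma6p2 (R : realType) (m : nat -> nat)
  (hinf : forall M : nat, exists N : nat, forall n : nat, (N <= n)%N -> (M <= m n)%N)
  (hsmall : forall eps : R, 0 < eps ->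
     exists N : nat, forall n : nat, (N <= n)%N -> (m n)%:R <= eps * n%:R) :
  exists C : R, exists N : nat, forall n : nat, (N <= n)%N ->
    `|VarS R n (m n)| <= C * ((m n)%:R * ln ((m n)%:R : R)).
Proof.
have [N1 m_ge2] := hinf 2%N.
have [N2 m_le] := hsmall 1 ltr01.
exists (3 * ln 8 + 2 * ln 8 ^+ 2 / ln 2), (maxn N1 N2) => n.
rewrite geq_max => /andP[/m_ge2 ge2 /m_le]; rewrite mul1r ler_nat => le_mn.
rewrite ger0_norm; last exact: Var_ge0.
by apply: VarS_le; rewrite ?ge2 ?le_mn //; lia.
Qed.
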